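(* Let $\Gamma$ be a finite multiset of formulas and $F$ a formula. Then $F\supset\bot,\Gamma\longrightarrow F$ has a $\mathbf{C}$-proof if and only if $\Gamma\longrightarrow F$ has a $\mathbf{C}$-proof.
   Context: Formulas are first-order formulas built from atomic formulas and the logical constants $\top$, $\bot$ (not counted as atomic) using $\land,\lor,\supset,\forall,\exists$; $B[t/x]$ is capture-avoiding substitution of term $t$ for free $x$ in $B$. A sequent $\Gamma\longrightarrow\Delta$ is a pair of finite multisets of formulas; $B,\Gamma$ denotes $\Gamma$ with an extra occurrence of $B$. A sequent is an axiom if $\top\in\Delta$ or some formula that is $\bot$ or atomic occurs in both $\Gamma$ and $\Delta$. Writing premises $\Rightarrow$ conclusion, the rules are all instances of: contr-L: $B,B,\Gamma\longrightarrow\Delta\Rightarrow B,\Gamma\longrightarrow\Delta$; contr-R: $\Gamma\longrightarrow\Delta,B,B\Rightarrow\Gamma\longrightarrow\Delta,B$; $\bot$-R: $\Gamma\longrightarrow\Delta,\bot\Rightarrow\Gamma\longrightarrow\Delta,D$; $\land$-L: $B,\Gamma\longrightarrow\Delta\Rightarrow B\land D,\Gamma\longrightarrow\Delta$ and $D,\Gamma\longrightarrow\Delta\Rightarrow B\land D,\Gamma\longrightarrow\Delta$; $\lor$-L: $B,\Gamma\longrightarrow\Delta$ and $D,\Gamma\longrightarrow\Delta\Rightarrow B\lor D,\Gamma\longrightarrow\Delta$; $\land$-R: $\Gamma\longrightarrow\Delta,B$ and $\Gamma\longrightarrow\Delta,D\Rightarrow\Gamma\longrightarrow\Delta,B\land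 D$; $\lor$-R: $\Gamma\longrightarrow\Delta,B\Rightarrow\Gamma\longrightarrow\Delta,B\lor D$ and $\Gamma\longrightarrow\Delta,D\Rightarrow\Gamma\longrightarrow\Delta,B\lor D$; $\supset$-L: $\Gamma\longrightarrow\Delta,B$ and $D,\Gamma\longrightarrow\Theta\Rightarrow B\supset D,\Gamma\longrightarrow\Delta,\Theta$; $\supset$-R: $B,\Gamma\longrightarrow\Delta,D\Rightarrow\Gamma\longrightarrow\Delta,B\supset D$; $\forall$-L: $B[t/x],\Gamma\longrightarrow\Delta\Rightarrow\forall x B,\Gamma\longrightarrow\Delta$; $\exists$-R: $\Gamma\longrightarrow\Delta,B[t/x]\Rightarrow\Gamma\longrightarrow\Delta,\exists x B$ ($t$ any term); $\exists$-L: $B[c/x],\Gamma\longrightarrow\Delta\Rightarrow\exists x B,\Gamma\longrightarrow\Delta$; $\forall$-R: $\Gamma\longrightarrow\Delta,B[c/x]\Rightarrow\Gamma\longrightarrow\Delta,\forall x B$, where the constant $c$ does not occur in the conclusion. A $\mathbf{C}$-proof (classical) is a finite tree of sequents with axioms at the leaves, each internal node being the conclusion of a rule instance whose premises are its children. *)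

From Stdlib Require Import List Permutation PeanoNat.
Import ListNotations.

(* Terms: named free variables, de Bruijn bound variables, constants,
   and function symbols applied to argument lists. *)
Inductive term : Type :=
| TVar : nat -> term
| TBnd : nat -> term
| TCon : nat -> term
| TFun : nat -> list term -> term.

Inductive formula : Type :=
| Atom : nat -> list term -> formula
| Top : formula
| Bot : formula
| And : formula -> formula -> formula
| Or  : formula -> formula -> formula
| Imp : formula -> formula -> formula
| All : formula -> formula      (* body uses bound index 0 *)
| Ex  : formula -> formula.

(* replace bound index k by t (t is required to be closed when used) *)
Fixpoint topen (k : nat) (t u : term) : term :=
  match u with
  | TBnd i => if Nat.eqb i k then t else TBnd i
  | TFun f l => TFun f (map (topen k t) l)
  | _ => u
  end.

Fixpoint fopen (k : nat) (t : term) (A : formula) : formula :=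
  match A with
  | Atom p l => Atom p (map (topen k t) l)
  | Top => Top
  | Bot => Bot
  | And B D => And (fopen k t B) (fopen k t D)
  | Or B D => Or (fopen k t B) (fopen k t D)
  | Imp B D => Imp (fopen k t B) (fopen k t D)
  | All B => All (fopen (S k) t B)
  | Ex B => Ex (fopen (S k) t B)
  end.

(* B[t/x] for the quantified formula Qx B (body B) *)
Definition inst (B : formula) (t : term) : formula := fopen 0 t B.

Fixpoint tlc (k : nat) (u : term) : bool :=
  match u with
  | TBnd i => Nat.ltb i k
  | TFun _ l => forallb (tlc k) l
  | _ => true
  end.

Fixpoint flc (k : nat) (A : formula) : bool :=
  match A with
  | Atom _ l => forallb (tlc k) l
  | Top | Bot => true
  | And B D | Or B D | Imp B D => flc k B && flc k D
  | All B | Ex B => flc (S k) B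
  end.

Definition wf_formula (A : formula) : Prop := flc 0 A = true.
Definition closed_term (t : term) : Prop := tlc 0 t = true.

Fixpoint tcon_occ (c : nat) (u : term) : bool :=
  match u with
  | TCon d => Nat.eqb c d
  | TFun _ l => existsb (tcon_occ c) l
  | _ => false
  end.

Fixpoint fcon_occ (c : nat) (A : formula) : bool :=
  match A with
  | Atom _ l => existsb (tcon_occ c) l
  | Top | Bot => false
  | And B D | Or B D | Imp B D => fcon_occ c B || fcon_occ c D
  | All B | Ex B => fcon_occ c B
  end.

(* Sequents: pairs of finite multisets, represented by lists up to permutation *)
Definition sequent : Type := (list formula * list formula)%type.

Definition seq_eq (s1 s2 : sequent) : Prop :=
  Permutation (fst s1) (fst s2) /\ Permutation (snd s1) (snd s2).

Definition con_in_seq (c : nat) (s : sequent) : Prop :=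
  exists A, In A (fst s ++ snd s) /\ fcon_occ c A = true.

Definition is_atomic (A : formula) : Prop := exists p l, A = Atom p l.

Definition axiom (s : sequent) : Prop :=
  In Top (snd s) \/
  exists A, (A = Bot \/ is_atomic A) /\ In A (fst s) /\ In A (snd s).

(* rule instances: premises => conclusion (principal formulas written at the
   head; multiset reading is recovered by seq_eq in Cproof) *)
Inductive rule : list sequent -> sequent -> Prop :=
| r_contrL B G D : rule [(B :: B :: G, D)] (B :: G, D)
| r_contrR B G D : rule [(G, B :: B :: D)] (G, B :: D)
| r_botR X G D : rule [(G, Bot :: D)] (G, X :: D)
| r_andL1 B X G D : rule [(B :: G, D)] (And B X :: G, D)
| r_andL2 B X G D : rule [(X :: G, D)] (And B X :: G, D)
| r_orL B X G D : rule [(B :: G, D); (X :: G, D)] (Or B X :: G, D)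
| r_andR B X G D : rule [(G, B :: D); (G, X :: D)] (G, And B X :: D)
| r_orR1 B X G D : rule [(G, B :: D)] (G, Or B X :: D)
| r_orR2 B X G D : rule [(G, X :: D)] (G, Or B X :: D)
| r_impL B X G D T : rule [(G, B :: D); (X :: G, T)] (Imp B X :: G, D ++ T)
| r_impR B X G D : rule [(B :: G, X :: D)] (G, Imp B X :: D)
| r_allL B t G D : closed_term t ->
    rule [(inst B t :: G, D)] (All B :: G, D)
| r_exR B t G D : closed_term t ->
    rule [(G, inst B t :: D)] (G, Ex B :: D)
| r_exL B c G D : ~ con_in_seq c (Ex B :: G, D) ->
    rule [(inst B (TCon c) :: G, D)] (Ex B :: G, D)
| r_allR B c G D : ~ con_in_seq c (G, All B :: D) ->
    rule [(G, inst B (TCon c) :: D)] (G, All B :: D).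

Inductive Cproof : sequent -> Prop :=
| cp_ax s : axiom s -> Cproof s
| cp_rule prems concl s :
    rule prems concl -> seq_eq concl s ->
    (forall p, In p prems -> Cproof p) -> Cproof s.

(* It suffices to show, by induction on C-proofs, that whenever Γ' → Δ is provable and
   every formula of Γ' is F ⊃ ⊥ or occurs in Γ0, then Γ0 → Δ, F, E is provable for any E.
   The only interesting case is ⊃-L with principal formula F ⊃ ⊥: its left premise
   Γ'' → Δ', F yields Γ0 → Δ', F, F, E, and a right contraction finishes it.
   Enlarging the sequent may break the eigenconstant condition of ∃-L and ∀-R, so the
   statement is proved for every renaming of the constants of Γ' → Δ; in those cases
   the eigenconstant is then sent to a constant fresh for the enlarged sequent. *)

From Stdlib Require Import List Permutation PeanoNat Lia.
Import ListNotations.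

Fixpoint term_nested_ind (P : term -> Prop)
  (HV : forall n, P (TVar n)) (HB : forall n, P (TBnd n)) (HC : forall n, P (TCon n))
  (HF : forall f l, Forall P l -> P (TFun f l)) (u : term) : P u :=
  match u with
  | TVar n => HV n
  | TBnd n => HB n
  | TCon n => HC n
  | TFun f l =>
      HF f l ((fix args (l : list term) : Forall P l :=
                 match l with
                 | [] => Forall_nil _
                 | v :: r => Forall_cons _ (term_nested_ind P HV HB HC HF v) (args r)
                 end) l)
  end.

Fixpoint rename_term (s : nat -> nat) (u : term) : term :=
  match u with
  | TCon c => TCon (s c)
  | TFun f l => TFun f (map (rename_term s) l)
  | _ => u
  end.

Fixpoint rename_formula (s : nat -> nat) (A : formula) : formula :=
  match A with
  | Atom p l => Atom p (map (rename_term s) l)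
  | Top => Top
  | Bot => Bot
  | And B D => And (rename_formula s B) (rename_formula s D)
  | Or B D => Or (rename_formula s B) (rename_formula s D)
  | Imp B D => Imp (rename_formula s B) (rename_formula s D)
  | All B => All (rename_formula s B)
  | Ex B => Ex (rename_formula s B)
  end.

Lemma rename_term_open s k t u :
  rename_term s (topen k t u) = topen k (rename_term s t) (rename_term s u).
Proof.
  induction u as [| n | |f l IHl] using term_nested_ind; simpl; auto.
  - destruct (Nat.eqb n k); reflexivity.
  - f_equal. rewrite !map_map. apply map_ext_Forall. exact IHl.
Qed.

Lemma rename_formula_open s A : forall k t,
  rename_formula s (fopen k t A) = fopen k (rename_term s t) (rename_formula s A).
Proof.
  induction A; intros k t; simpl; f_equal; auto.
  rewrite !map_map. apply map_ext. intros u. apply rename_term_open.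
Qed.

Lemma rename_inst s B t :
  rename_formula s (inst B t) = inst (rename_formula s B) (rename_term s t).
Proof. apply rename_formula_open. Qed.

Lemma tlc_rename s k u : tlc k (rename_term s u) = tlc k u.
Proof.
  induction u as [| | |f l IHl] using term_nested_ind; simpl; auto.
  induction IHl as [|v l Hv _ IH]; simpl; congruence.
Qed.

Lemma closed_term_rename s t : closed_term t -> closed_term (rename_term s t).
Proof. unfold closed_term. now rewrite tlc_rename. Qed.

Lemma rename_term_ext s1 s2 u :
  (forall c, tcon_occ c u = true -> s1 c = s2 c) -> rename_term s1 u = rename_term s2 u.
Proof.
  induction u as [| | n |f l IHl] using term_nested_ind; simpl; intros Hs; auto.
  - rewrite (Hs n); auto using Nat.eqb_refl.
  - f_equal. induction IHl as [|v l Hv _ IH]; simpl in *; auto.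
    f_equal; [apply Hv | apply IH]; intros c Hc; apply Hs; rewrite Hc; auto using Bool.orb_true_r.
Qed.

Lemma rename_formula_ext s1 s2 A :
  (forall c, fcon_occ c A = true -> s1 c = s2 c) -> rename_formula s1 A = rename_formula s2 A.
Proof.
  induction A as [p l| | |B IHB D IHD|B IHB D IHD|B IHB D IHD|B IHB|B IHB]; simpl; intros Hs;
    f_equal; auto;
    try (apply IHB || apply IHD; intros c Hc; apply Hs; rewrite Hc; auto using Bool.orb_true_r).
  induction l as [|u l IH]; simpl in *; auto.
  f_equal; [apply rename_term_ext | apply IH]; intros c Hc; apply Hs; rewrite Hc;
    auto using Bool.orb_true_r.
Qed.

Lemma rename_term_id u : rename_term (fun c => c) u = u.
Proof.
  induction u as [| | |f l IHl] using term_nested_ind; simpl; auto.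
  f_equal. induction IHl as [|v l Hv _ IH]; simpl; congruence.
Qed.

Lemma rename_formula_id A : rename_formula (fun c => c) A = A.
Proof.
  induction A as [p l| | | | | | |]; simpl; f_equal; auto.
  induction l as [|u l IH]; simpl; f_equal; auto using rename_term_id.
Qed.

Lemma map_rename_formula_id L : map (rename_formula (fun c => c)) L = L.
Proof. rewrite (map_ext _ _ rename_formula_id). apply map_id. Qed.

Definition rename_upd (s : nat -> nat) (c d : nat) (x : nat) : nat :=
  if Nat.eqb x c then d else s x.

Lemma rename_upd_fresh s c d A :
  fcon_occ c A = false -> rename_formula (rename_upd s c d) A = rename_formula s A.
Proof.
  intros Hc. apply rename_formula_ext. intros c' Hc'. unfold rename_upd.
  destruct (Nat.eqb_spec c' c) as [->|]; congruence.
Qed.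

Lemma map_rename_upd_fresh s c d L :
  (forall A, In A L -> fcon_occ c A = false) ->
  map (rename_formula (rename_upd s c d)) L = map (rename_formula s) L.
Proof. intros HL. apply map_ext_in. intros A HA. now apply rename_upd_fresh, HL. Qed.

Lemma rename_upd_inst_fresh s c d B :
  fcon_occ c B = false ->
  rename_formula (rename_upd s c d) (inst B (TCon c)) = inst (rename_formula s B) (TCon d).
Proof.
  intros Hc. rewrite rename_inst, rename_upd_fresh by exact Hc.
  simpl. unfold rename_upd. now rewrite Nat.eqb_refl.
Qed.

Fixpoint term_con_bound (u : term) : nat :=
  match u with
  | TCon c => S c
  | TFun _ l => list_max (map term_con_bound l)
  | _ => 0
  end.

Fixpoint formula_con_bound (A : formula) : nat :=
  match A with
  | Atom _ l => list_max (map term_con_bound l)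
  | Top | Bot => 0
  | And B D | Or B D | Imp B D => max (formula_con_bound B) (formula_con_bound D)
  | All B | Ex B => formula_con_bound B
  end.

Lemma tcon_occ_bound c u : term_con_bound u <= c -> tcon_occ c u = false.
Proof.
  induction u as [| | n |f l IHl] using term_nested_ind; simpl; intros Hc; auto.
  - apply Nat.eqb_neq. lia.
  - induction IHl as [|v l Hv _ IH]; simpl in *; auto.
    apply Nat.max_lub_iff in Hc as [Hcv Hcl]. now rewrite Hv, IH.
Qed.

Lemma fcon_occ_bound c A : formula_con_bound A <= c -> fcon_occ c A = false.
Proof.
  induction A as [p l| | |B IHB D IHD|B IHB D IHD|B IHB D IHD|B IHB|B IHB]; simpl; intros Hc;
    auto; try (apply Nat.max_lub_iff in Hc as [HcB HcD]; now rewrite IHB, IHD).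
  induction l as [|u l IH]; simpl in *; auto.
  apply Nat.max_lub_iff in Hc as [Hcu Hcl]. now rewrite tcon_occ_bound, IH.
Qed.

Lemma exists_fresh_con (s : sequent) : exists d, ~ con_in_seq d s.
Proof.
  set (L := map formula_con_bound (fst s ++ snd s)).
  exists (list_max L). intros [A [HA Hocc]].
  rewrite fcon_occ_bound in Hocc; [discriminate|].
  assert (Hbound : Forall (fun k => k <= list_max L) L) by now apply list_max_le.
  rewrite Forall_forall in Hbound. apply Hbound, in_map, HA.
Qed.

Lemma fcon_occ_not_in_seq c s :
  ~ con_in_seq c s -> forall A, In A (fst s ++ snd s) -> fcon_occ c A = false.
Proof.
  intros Hc A HA. destruct (fcon_occ c A) eqn:Hocc; auto.
  exfalso. apply Hc. now exists A.
Qed.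

Lemma Cproof_seq_eq s s' : Cproof s -> seq_eq s s' -> Cproof s'.
Proof.
  intros Hs [HG HD]. destruct Hs as [s Hax|prems concl s Hr [HG' HD'] Hprems].
  - apply cp_ax. destruct Hax as [Htop|[A [HA [HAG HAD]]]].
    + left. eapply Permutation_in; eauto.
    + right. exists A. split; [|split]; eauto using Permutation_in.
  - eapply cp_rule; eauto. split; eapply Permutation_trans; eauto.
Qed.

Lemma Cproof_perm G D G' D' :
  Cproof (G, D) -> Permutation G G' -> Permutation D D' -> Cproof (G', D').
Proof. intros H HG HD. eapply Cproof_seq_eq; eauto. now split. Qed.

Lemma Cproof_rule1 p c : rule [p] c -> Cproof p -> Cproof c.
Proof.
  intros Hr Hp. eapply cp_rule; eauto.
  - split; apply Permutation_refl.
  - intros q [<-|[]]; exact Hp.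
Qed.

Lemma Cproof_rule2 p q c : rule [p; q] c -> Cproof p -> Cproof q -> Cproof c.
Proof.
  intros Hr Hp Hq. eapply cp_rule; eauto.
  - split; apply Permutation_refl.
  - intros x [<-|[<-|[]]]; assumption.
Qed.

Lemma Cproof_contrL_in P G D : In P G -> Cproof (P :: G, D) -> Cproof (G, D).
Proof.
  intros HP H. apply in_split in HP as [G1 [G2 ->]].
  eapply Cproof_perm; [| apply Permutation_middle | apply Permutation_refl].
  apply (Cproof_rule1 _ _ (r_contrL P (G1 ++ G2) D)).
  eapply Cproof_perm; [exact H | | apply Permutation_refl].
  apply perm_skip, Permutation_sym, Permutation_middle.
Qed.

Lemma Cproof_contrR_middle G D F D1 D2 :
  Cproof (G, D) -> Permutation D (F :: F :: D1 ++ D2) -> Cproof (G, D1 ++ F :: D2).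
Proof.
  intros H HD. eapply Cproof_perm; [| apply Permutation_refl | apply Permutation_middle].
  apply (Cproof_rule1 _ _ (r_contrR F G _)).
  exact (Cproof_perm _ _ _ _ H (Permutation_refl G) HD).
Qed.

Lemma incl_cons_shift {T : Type} (a x : T) (L M : list T) :
  incl L (x :: M) -> incl (a :: L) (x :: a :: M).
Proof. intros H y [<-|Hy]; [now right; left|]. destruct (H y Hy) as [<-|]; simpl; auto. Qed.

Section ImpBotLeft.
Variable F : formula.

Definition imp_bot_shiftable (s : sequent) : Prop :=
  forall (r : nat -> nat) (G0 E : list formula),
    incl (map (rename_formula r) (fst s)) (Imp F Bot :: G0) ->
    Cproof (G0, map (rename_formula r) (snd s) ++ F :: E).

Lemma shiftable_left_principal P G D :
  (forall r, rename_formula r P <> Imp F Bot) ->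
  (forall r G0 E, incl (map (rename_formula r) G) (Imp F Bot :: G0) ->
     Cproof (rename_formula r P :: G0, map (rename_formula r) D ++ F :: E)) ->
  imp_bot_shiftable (P :: G, D).
Proof.
  intros HP Hstep r G0 E Hinc.
  assert (HPin : In (rename_formula r P) G0).
  { destruct (Hinc _ (or_introl eq_refl)) as [Heq|]; [now destruct (HP r)|assumption]. }
  apply (Cproof_contrL_in _ _ _ HPin), Hstep.
  intros A HA. apply Hinc. now right.
Qed.

Lemma shiftable_axiom s : axiom s -> imp_bot_shiftable s.
Proof.
  intros [Htop|[A [HA [HAG HAD]]]] r G0 E Hinc; apply cp_ax.
  - left. apply in_or_app. left. exact (in_map (rename_formula r) _ _ Htop).
  - right. exists (rename_formula r A). split; [|split].
    + destruct HA as [->|[p [l ->]]]; [now left|right; now eexists _, _].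
    + destruct (Hinc _ (in_map _ _ _ HAG)) as [Heq|]; [|assumption].
      exfalso. destruct HA as [->|[p [l ->]]]; discriminate.
    + apply in_or_app. left. now apply in_map.
Qed.

Lemma shiftable_seq_eq s s' : seq_eq s s' -> imp_bot_shiftable s -> imp_bot_shiftable s'.
Proof.
  intros [HG HD] Hs r G0 E Hinc.
  eapply Cproof_perm; [| apply Permutation_refl |].
  - apply Hs. intros A HA. apply Hinc.
    eapply Permutation_in; [apply Permutation_map, HG | exact HA].
  - apply Permutation_app_tail, Permutation_map, HD.
Qed.

Lemma shiftable_contrL B G D :
  imp_bot_shiftable (B :: B :: G, D) -> imp_bot_shiftable (B :: G, D).
Proof. intros IH r G0 E Hinc. apply IH. intros A [<-|HA]; apply Hinc; simpl; auto. Qed.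

Lemma shiftable_contrR B G D :
  imp_bot_shiftable (G, B :: B :: D) -> imp_bot_shiftable (G, B :: D).
Proof.
  intros IH r G0 E Hinc. apply (Cproof_rule1 _ _ (r_contrR _ _ _)), IH, Hinc.
Qed.

Lemma shiftable_botR X G D :
  imp_bot_shiftable (G, Bot :: D) -> imp_bot_shiftable (G, X :: D).
Proof.
  intros IH r G0 E Hinc. apply (Cproof_rule1 _ _ (r_botR _ _ _)), IH, Hinc.
Qed.

Lemma shiftable_andL1 B X G D :
  imp_bot_shiftable (B :: G, D) -> imp_bot_shiftable (And B X :: G, D).
Proof.
  intros IH. apply shiftable_left_principal; [discriminate|]. intros r G0 E Hinc.
  apply (Cproof_rule1 _ _ (r_andL1 _ _ _ _)), IH, incl_cons_shift, Hinc.
Qed.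

Lemma shiftable_andL2 B X G D :
  imp_bot_shiftable (X :: G, D) -> imp_bot_shiftable (And B X :: G, D).
Proof.
  intros IH. apply shiftable_left_principal; [discriminate|]. intros r G0 E Hinc.
  apply (Cproof_rule1 _ _ (r_andL2 _ _ _ _)), IH, incl_cons_shift, Hinc.
Qed.

Lemma shiftable_orL B X G D :
  imp_bot_shiftable (B :: G, D) -> imp_bot_shiftable (X :: G, D) ->
  imp_bot_shiftable (Or B X :: G, D).
Proof.
  intros IH1 IH2. apply shiftable_left_principal; [discriminate|]. intros r G0 E Hinc.
  apply (Cproof_rule2 _ _ _ (r_orL _ _ _ _));
    [apply IH1 | apply IH2]; apply incl_cons_shift, Hinc.
Qed.

Lemma shiftable_andR B X G D :
  imp_bot_shiftable (G, B :: D) -> imp_bot_shiftable (G, X :: D) ->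
  imp_bot_shiftable (G, And B X :: D).
Proof.
  intros IH1 IH2 r G0 E Hinc.
  apply (Cproof_rule2 _ _ _ (r_andR _ _ _ _)); [apply IH1 | apply IH2]; exact Hinc.
Qed.

Lemma shiftable_orR1 B X G D :
  imp_bot_shiftable (G, B :: D) -> imp_bot_shiftable (G, Or B X :: D).
Proof.
  intros IH r G0 E Hinc. apply (Cproof_rule1 _ _ (r_orR1 _ _ _ _)), IH, Hinc.
Qed.

Lemma shiftable_orR2 B X G D :
  imp_bot_shiftable (G, X :: D) -> imp_bot_shiftable (G, Or B X :: D).
Proof.
  intros IH r G0 E Hinc. apply (Cproof_rule1 _ _ (r_orR2 _ _ _ _)), IH, Hinc.
Qed.

Lemma shiftable_impR B X G D :
  imp_bot_shiftable (B :: G, X :: D) -> imp_bot_shiftable (G, Imp B X :: D).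
Proof.
  intros IH r G0 E Hinc.
  apply (Cproof_rule1 _ _ (r_impR _ _ _ _)), IH, incl_cons_shift, Hinc.
Qed.

Lemma shiftable_allL B t G D :
  closed_term t ->
  imp_bot_shiftable (inst B t :: G, D) -> imp_bot_shiftable (All B :: G, D).
Proof.
  intros Ht IH. apply shiftable_left_principal; [discriminate|]. intros r G0 E Hinc.
  apply (Cproof_rule1 _ _ (r_allL _ (rename_term r t) _ _ (closed_term_rename r t Ht))).
  rewrite <- rename_inst. apply IH, incl_cons_shift, Hinc.
Qed.

Lemma shiftable_exR B t G D :
  closed_term t ->
  imp_bot_shiftable (G, inst B t :: D) -> imp_bot_shiftable (G, Ex B :: D).
Proof.
  intros Ht IH r G0 E Hinc.
  apply (Cproof_rule1 _ _ (r_exR _ (rename_term r t) _ _ (closed_term_rename r t Ht))).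
  rewrite <- rename_inst. apply IH, Hinc.
Qed.

Lemma shiftable_impL B X G D T :
  imp_bot_shiftable (G, B :: D) -> imp_bot_shiftable (X :: G, T) ->
  imp_bot_shiftable (Imp B X :: G, D ++ T).
Proof.
  intros IH1 IH2 r G0 E Hinc. cbn [fst snd] in *. rewrite map_app.
  assert (HG : incl (map (rename_formula r) G) (Imp F Bot :: G0)).
  { intros A HA. apply Hinc. now right. }
  destruct (Hinc _ (or_introl eq_refl)) as [Heq|Hin].
  - injection Heq as HB _.
    apply Cproof_contrR_middle
      with (D := map (rename_formula r) (B :: D) ++ F :: map (rename_formula r) T ++ E).
    + exact (IH1 r G0 _ HG).
    + simpl. rewrite HB, <- app_assoc. apply perm_skip, Permutation_sym, Permutation_middle.
  - apply (Cproof_contrL_in _ _ _ Hin). simpl.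
    apply Cproof_contrR_middle
      with (D := (map (rename_formula r) D ++ [F]) ++ map (rename_formula r) T ++ F :: E).
    + apply (Cproof_rule2 _ _ _ (r_impL _ _ _ _ _)).
      * exact (IH1 r G0 [] HG).
      * apply IH2, incl_cons_shift, HG.
    + rewrite <- app_assoc. eapply Permutation_trans; [apply Permutation_sym, Permutation_middle|].
      apply perm_skip. rewrite app_assoc. apply Permutation_sym, Permutation_middle.
Qed.

Lemma shiftable_exL B c G D :
  ~ con_in_seq c (Ex B :: G, D) ->
  imp_bot_shiftable (inst B (TCon c) :: G, D) -> imp_bot_shiftable (Ex B :: G, D).
Proof.
  intros Hc IH. apply shiftable_left_principal; [discriminate|]. intros r G0 E Hinc.
  pose proof (fcon_occ_not_in_seq _ _ Hc) as Hfresh. simpl in Hfresh.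
  destruct (exists_fresh_con (Ex (rename_formula r B) :: G0, map (rename_formula r) D ++ F :: E))
    as [d Hd].
  apply (Cproof_rule1 _ _ (r_exL _ _ _ _ Hd)).
  rewrite <- (map_rename_upd_fresh r c d D) by (intros; apply Hfresh; right; apply in_or_app; auto).
  apply IH. simpl. rewrite rename_upd_inst_fresh by (apply (Hfresh (Ex B)); auto).
  rewrite map_rename_upd_fresh by (intros; apply Hfresh; right; apply in_or_app; auto).
  apply incl_cons_shift, Hinc.
Qed.

Lemma shiftable_allR B c G D :
  ~ con_in_seq c (G, All B :: D) ->
  imp_bot_shiftable (G, inst B (TCon c) :: D) -> imp_bot_shiftable (G, All B :: D).
Proof.
  intros Hc IH r G0 E Hinc.
  pose proof (fcon_occ_not_in_seq _ _ Hc) as Hfresh. simpl in Hfresh.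
  destruct (exists_fresh_con (G0, All (rename_formula r B) :: map (rename_formula r) D ++ F :: E))
    as [d Hd].
  apply (Cproof_rule1 _ _ (r_allR _ _ _ _ Hd)).
  rewrite <- (map_rename_upd_fresh r c d D) by (intros; apply Hfresh, in_or_app; simpl; auto).
  rewrite <- (rename_upd_inst_fresh r c d B) by (apply (Hfresh (All B)), in_or_app; simpl; auto).
  apply IH. simpl.
  rewrite map_rename_upd_fresh by (intros; apply Hfresh, in_or_app; auto).
  exact Hinc.
Qed.

Lemma shiftable_rule prems concl :
  rule prems concl -> (forall p, In p prems -> imp_bot_shiftable p) -> imp_bot_shiftable concl.
Proof.
  intros Hr IH.
  destruct Hr;
    [ apply shiftable_contrL | apply shiftable_contrR | apply shiftable_botR
    | apply shiftable_andL1 | apply shiftable_andL2 | apply shiftable_orL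
    | apply shiftable_andR | apply shiftable_orR1 | apply shiftable_orR2
    | apply shiftable_impL | apply shiftable_impR | eapply shiftable_allL
    | eapply shiftable_exR | eapply shiftable_exL | eapply shiftable_allR ];
    eauto using in_eq, in_cons.
Qed.

Lemma Cproof_shiftable s : Cproof s -> imp_bot_shiftable s.
Proof.
  induction 1 as [s Hax|prems concl s Hr Hs _ IH].
  - now apply shiftable_axiom.
  - exact (shiftable_seq_eq _ _ Hs (shiftable_rule _ _ Hr IH)).
Qed.

Lemma Cproof_imp_bot_l G D : Cproof (Imp F Bot :: G, D) -> Cproof (G, D ++ [F]).
Proof.
  intros H. rewrite <- (map_rename_formula_id D).
  apply (Cproof_shiftable _ H). cbn [fst]. rewrite map_rename_formula_id. apply incl_refl.
Qed.

End ImpBotLeft.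

Theorem lemma3 (G : list formula) (F : formula) :
  (forall A, In A G -> wf_formula A) -> wf_formula F ->
  (Cproof (Imp F Bot :: G, [F]) <-> Cproof (G, [F])).
Proof.
  intros _ _. split.
  - intros H. apply (Cproof_contrR_middle _ [F; F] F [] []).
    + exact (Cproof_imp_bot_l F G [F] H).
    + apply Permutation_refl.
  - intros H. apply (Cproof_rule2 _ _ _ (r_impL F Bot G [] [F]) H).
    apply (Cproof_rule1 _ _ (r_botR F _ _)), cp_ax.
    right. exists Bot. simpl. auto.
Qed.
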